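(* Let $n\ge1$, $L>0$, and let $\beta:\mathbb R\to\mathbb R$ be non-decreasing. Define, for $U$ in $$D(A)=\Big\{U\in L^\infty(0,L):\ \kappa_n(s)\frac{d^2U}{ds^2}\in L^\infty(0,L),\ \frac{dU}{ds}(L)=0,\ U(0)=0\Big\},$$ the operator $AU=\kappa_n(s)\,\beta\big(-\kappa_n(s)\frac{d^2U}{ds^2}\big)$. Then for all $U,V\in D(A)$ and $\lambda>0$, $$\big\|(U-V)_+\big\|_{L^\infty(0,L)}\le\big\|\big(U-V+\lambda(AU-AV)\big)_+\big\|_{L^\infty(0,L)}.$$
   Context: $\kappa_n(s)=n\omega_n^{1/n}s^{1/n'}$ with $n'=n/(n-1)$ and $\omega_n$ the volume of the unit ball of $\mathbb R^n$; $(\cdot)_+$ denotes the positive part. *)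

From HB Require Import structures.
From mathcomp Require Import all_boot all_order all_algebra.
From mathcomp Require Import all_classical all_reals all_analysis.
Set Implicit Arguments. Unset Strict Implicit. Unset Printing Implicit Defensive.
Import Order.TTheory GRing.Theory Num.Theory.
Import numFieldNormedType.Exports.
Local Open Scope classical_set_scope.
Local Open Scope ring_scope.

(* Volume of the unit ball of R^n: omega_0 = 1, omega_1 = 2,
   omega_(m+2) = 2 pi / (m+2) * omega_m. *)
Fixpoint omega {R : realType} (n : nat) : R :=
  match n with
  | 0%N => 1
  | 1%N => 2
  | (m.+2)%N => 2 * pi / (m.+2)%:R * omega m
  end.

Definition kappa {R : realType} (n : nat) (s : R) : R :=
  n%:R * (omega n `^ (n%:R)^-1) * (s `^ (1 - (n%:R)^-1)).

Definition lebR {R : realType} := (@lebesgue_measure R).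

Definition leb0L {R : realType} (L : R) :=
  mrestr (@lebesgue_measure R) (measurable_itv `]0, L[).

Definition LinfNorm {R : realType} (L : R) (f : R -> R) : \bar R :=
  Lnorm (leb0L L) +oo%E (EFin \o f).

Definition pos_part {R : realType} (x : R) : R := Num.max x 0.

(* Membership of U in D(A), with U1 the (continuous) derivative dU/ds on
   [0,L] and U2 a (Lebesgue integrable) representative of d^2U/ds^2:
   U is W^{2,1}(0,L), kappa_n U2 in L^infinity(0,L), U'(L) = 0, U(0) = 0. *)
Definition inDA {R : realType} (n : nat) (L : R) (U U1 U2 : R -> R) : Prop :=
  [/\ measurable_fun `[0, L] U2,
      lebR.-integrable `[0, L] (EFin \o U2),
      (LinfNorm L (fun s => (kappa n s * U2 s)%R) < +oo)%E,
      (forall s, s \in `[0, L] -> U1 s = U1 L - Rintegral lebR `[s, L] U2) &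
      (forall s, s \in `[0, L] -> U s = U 0 + Rintegral lebR `[0, s] U1)]
  /\ U1 L = 0 /\ U 0 = 0.

Definition opA {R : realType} (n : nat) (beta : R -> R) (U2 : R -> R) : R -> R :=
  fun s => kappa n s * beta (- (kappa n s * U2 s)).

From HB Require Import structures.
From mathcomp Require Import all_boot all_order all_algebra.
From mathcomp Require Import all_classical all_reals all_analysis.
From mathcomp Require Import measurable_realfun ess_sup_inf lra.
Set Implicit Arguments. Unset Strict Implicit. Unset Printing Implicit Defensive.
Import Order.TTheory GRing.Theory Num.Theory.
Import numFieldNormedType.Exports.
Local Open Scope classical_set_scope.
Local Open Scope ring_scope.

(* Put W := U - V and r := ||(W + lambda (AU - AV))_+||_oo.  Wherever W > r the
   resolvent bound forces AU < AV, hence, kappa_n being positive and beta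
   nondecreasing, W'' = U'' - V'' > 0 almost everywhere there.  So W obeys a
   maximum principle under W(0) = 0, W'(L) = 0: at a maximum point s0 with
   W(s0) > r, W' is strictly increasing near s0, so W grows to the right of s0
   if W'(s0) > 0 and to the left if W'(s0) <= 0 (the only case at s0 = L, since
   W'(L) = 0).  Hence W <= r on [0, L], i.e. ||W_+||_oo <= r. *)

Section operator_A.
Context {R : realType}.

Lemma omega_gt0 n : 0 < @omega R n.
Proof.
suff : 0 < @omega R n /\ 0 < @omega R n.+1 by case.
elim: n => [|n [IHn IHn1]] //=; split => //.
by rewrite mulr_gt0 // divr_gt0 // mulr_gt0 // pi_gt0.
Qed.

Lemma kappa_gt0 n s : (0 < n)%N -> 0 < s -> 0 < @kappa R n s.
Proof. by move=> n0 s0; rewrite !mulr_gt0 ?powR_gt0 ?omega_gt0 ?ltr0n. Qed.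

Lemma opA_antimono_lt n (beta : R -> R) (U2 V2 : R -> R) s :
  (0 < n)%N -> 0 < s -> {homo beta : x y / x <= y} ->
  opA n beta U2 s < opA n beta V2 s -> V2 s < U2 s.
Proof.
move=> n0 s0 beta_mono; have k0 := kappa_gt0 n0 s0.
rewrite /opA ltr_pM2l // => lt_beta.
rewrite -(ltr_pM2l k0) -ltrN2 ltNge; apply/negP => /beta_mono.
by rewrite leNgt lt_beta.
Qed.

Lemma opA_resolvent_lt n (beta : R -> R) (U2 V2 : R -> R) (w lambda r s : R) :
  (0 < n)%N -> 0 < s -> {homo beta : x y / x <= y} -> 0 < lambda ->
  pos_part (w + lambda * (opA n beta U2 s - opA n beta V2 s)) <= r -> r < w ->
  V2 s < U2 s.
Proof.
move=> n_gt0 s_gt0 beta_mono lambda_gt0; rewrite /pos_part ge_max => /andP[le_r _] r_lt_w.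
have : lambda * (opA n beta U2 s - opA n beta V2 s) < 0 by lra.
by rewrite pmulr_rlt0 // subr_lt0; exact: opA_antimono_lt.
Qed.

End operator_A.

Section integral_sign.
Context {R : realType}.
Local Notation mu := (@lebesgue_measure R).

Lemma Rintegral_gt0 (I : set R) (g : R -> R) : measurable I ->
  mu.-integrable I (EFin \o g) -> (0 < mu I)%E ->
  {ae mu, forall x, I x -> 0 < g x} -> 0 < \int[mu]_(x in I) g x.
Proof.
move=> mI ig muI gpos; have [mg _] := integrableP _ _ _ ig.
have absE : (\int[mu]_(x in I) `|(EFin \o g) x| = \int[mu]_(x in I) (g x)%:E)%E.
  apply: ae_eq_integral => //.
    by apply/measurable_EFinP/measurableT_comp => //; exact/measurable_EFinP.
  apply: (filterS (F := almost_everywhere mu) _ gpos) => x gx /gx g_gt0.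
  by rewrite /= gtr0_norm.
have int_fin : (\int[mu]_(x in I) (g x)%:E)%E \is a fin_num.
  exact: integrable_fin_num.
rewrite lt_neqAle /Rintegral -absE fine_ge0 ?integral_ge0 // andbT.
apply/eqP => int0.
have abs0 : (\int[mu]_(x in I) `|(EFin \o g) x| = 0)%E.
  by rewrite absE -(fineK int_fin) -absE -int0.
have g0 : {ae mu, forall x, I x -> g x = 0}.
  have := (ae_eq_integral_abs mu mI mg).1 abs0.
  by apply: filterS => x gx0 /gx0 [].
have : {ae mu, forall x, ~ I x}.
  apply: (filterS2 (F := almost_everywhere mu) _ _ g0 gpos) => x gx0 gx Ix.
  by move: (gx Ix); rewrite gx0 // ltxx.
move=> /negligibleP; rewrite setCK => /(_ mI) muI0.
by move: muI; rewrite muI0 ltxx.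
Qed.

Lemma Rintegral_lt0 (I : set R) (g : R -> R) : measurable I ->
  mu.-integrable I (EFin \o g) -> (0 < mu I)%E ->
  (forall x, I x -> g x < 0) -> \int[mu]_(x in I) g x < 0.
Proof.
move=> mI ig muI gneg.
have igN : mu.-integrable I (EFin \o (fun x => -1 * g x)).
  have := @integrableZl _ _ _ mu _ mI (-1) _ ig.
  by apply: eq_integrable => // x _ /=; rewrite EFinM.
have := Rintegral_gt0 mI igN muI (aeW _ _).
rewrite RintegralZl // mulN1r oppr_gt0; apply => x Ix.
by rewrite mulN1r oppr_gt0 gneg.
Qed.

End integral_sign.

Section dirichlet_neumann.
Context {R : realType}.
Local Notation mu := (@lebesgue_measure R).

Lemma Rintegral_itv_tail_continuous (a b : R) (g : R -> R) : a <= b ->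
  mu.-integrable `[a, b] (EFin \o g) ->
  {within `[a, b], continuous (fun s => \int[mu]_(t in `[s, b]) g t)}.
Proof.
move=> ab ig.
pose F s := \int[mu]_(t in `[a, b]) g t - \int[mu]_(t in `[a, s]) g t.
have FE : {in [set` `[a, b]], F =1 (fun s => \int[mu]_(t in `[s, b]) g t)}.
  move=> s; rewrite inE /= in_itv /= => /andP[a_le_s s_le_b].
  rewrite /F Rintegral_itvB ?bnd_simp // Rintegral_itv_obnd_cbnd //.
  by apply: integrableS ig => //; apply: subset_itvr; rewrite bnd_simp.
apply: subspace_eq_continuous FE _.
apply: within_continuousB; first by move=> x; exact: cvg_cst.
exact: parameterized_integral_continuous.
Qed.

(* W'' = W2 on [0, L] with W(0) = 0 and W'(L) = 0, in integrated form; W1 stands for W'. *)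
Record dirichlet_neumann (L : R) (W W1 W2 : R -> R) : Prop := DirichletNeumann {
  dn_integrable2 : mu.-integrable `[0, L] (EFin \o W2);
  dn_W1E : {in `[0, L], forall s, W1 s = - \int[mu]_(t in `[s, L]) W2 t};
  dn_WE : {in `[0, L], forall s, W s = \int[mu]_(t in `[0, s]) W1 t} }.

Section dirichlet_neumann_theory.
Variables (L : R) (W W1 W2 : R -> R).
Hypotheses (L_ge0 : 0 <= L) (dnW : dirichlet_neumann L W W1 W2).

Lemma dn_W1_continuous : {within `[0, L], continuous W1}.
Proof.
have W1E : {in [set` `[0, L]], (fun s => 0 - \int[mu]_(t in `[s, L]) W2 t) =1 W1}.
  by move=> s; rewrite inE /= => sI; rewrite (dn_W1E dnW) // sub0r.
apply: subspace_eq_continuous W1E _.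
apply: within_continuousB; first by move=> x; exact: cvg_cst.
exact: Rintegral_itv_tail_continuous (dn_integrable2 dnW).
Qed.

Lemma dn_integrable1 : mu.-integrable `[0, L] (EFin \o W1).
Proof.
apply: continuous_compact_integrable; first exact: segment_compact.
exact: dn_W1_continuous.
Qed.

Lemma dn_W_continuous : {within `[0, L], continuous W}.
Proof.
have WE : {in [set` `[0, L]], (fun s => \int[mu]_(t in `[0, s]) W1 t) =1 W}.
  by move=> s; rewrite inE /= => sI; rewrite (dn_WE dnW).
apply: subspace_eq_continuous WE _.
exact: parameterized_integral_continuous dn_integrable1.
Qed.

Lemma dn_W0 : W 0 = 0.
Proof.
by rewrite (dn_WE dnW) ?set_itv1 ?Rintegral_set1 // in_itv /= lexx.
Qed.

Lemma dn_W1L : W1 L = 0.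
Proof.
by rewrite (dn_W1E dnW) ?set_itv1 ?Rintegral_set1 ?oppr0 // in_itv /= lexx L_ge0.
Qed.

Lemma dn_W1B t u : 0 <= t -> t <= u -> u <= L ->
  W1 u - W1 t = \int[mu]_(x in `[t, u[) W2 x.
Proof.
move=> t_ge0 tu uL; have tL := le_trans tu uL; have u_ge0 := le_trans t_ge0 tu.
have itL : mu.-integrable `[t, L] (EFin \o W2).
  by apply: integrableS (dn_integrable2 dnW) => //; apply: subset_itvr; rewrite bnd_simp.
rewrite !(dn_W1E dnW) ?in_itv /= ?t_ge0 ?tL ?u_ge0 ?uL //.
have uLE : \int[mu]_(x in `]u, L]) W2 x = \int[mu]_(x in `[u, L]) W2 x.
  apply: Rintegral_itv_obnd_cbnd.
  by apply: integrableS itL => //; apply: subset_itvr; rewrite bnd_simp.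
rewrite Rintegral_itv_bndo_bndc; last first.
  by apply: integrableS itL => //; apply: subset_itvl; rewrite bnd_simp.
rewrite -uLE -(Rintegral_itvB itL) ?bnd_simp //; lra.
Qed.

Lemma dn_WB t u : 0 <= t -> t <= u -> u <= L ->
  W u - W t = \int[mu]_(x in `]t, u[) W1 x.
Proof.
move=> t_ge0 tu uL; have tL := le_trans tu uL; have u_ge0 := le_trans t_ge0 tu.
have i0u : mu.-integrable `[0, u] (EFin \o W1).
  by apply: integrableS dn_integrable1 => //; apply: subset_itvl; rewrite bnd_simp.
rewrite !(dn_WE dnW) ?in_itv /= ?t_ge0 ?tL ?u_ge0 ?uL //.
rewrite (Rintegral_itvB i0u) ?bnd_simp // Rintegral_itv_bndo_bndc //.
by apply: integrableS i0u => //; apply: subset_itvScc; rewrite bnd_simp.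
Qed.

Lemma dn_W_lt t u : 0 <= t -> t < u -> u <= L ->
  (forall x, t < x < u -> 0 < W1 x) -> W t < W u.
Proof.
move=> t_ge0 tu uL W1_gt0; rewrite -subr_gt0 dn_WB // ?ltW //.
apply: Rintegral_gt0 => //.
- by apply: integrableS dn_integrable1 => //; apply: subset_itvScc; rewrite bnd_simp.
- by rewrite lebesgue_measure_itv /= lte_fin tu -EFinD lte_fin subr_gt0.
- by apply: aeW => x; rewrite /= in_itv /=; exact: W1_gt0.
Qed.

Lemma dn_W_gt t u : 0 <= t -> t < u -> u <= L ->
  (forall x, t < x < u -> W1 x < 0) -> W u < W t.
Proof.
move=> t_ge0 tu uL W1_lt0; rewrite -subr_lt0 dn_WB // ?ltW //.
apply: Rintegral_lt0 => //.
- by apply: integrableS dn_integrable1 => //; apply: subset_itvScc; rewrite bnd_simp.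
- by rewrite lebesgue_measure_itv /= lte_fin tu -EFinD lte_fin subr_gt0.
Qed.

Section maximum_principle.
Variable r : R.
Hypotheses (r_ge0 : 0 <= r)
  (W2_gt0 : {ae mu, forall x, 0 < x < L -> r < W x -> 0 < W2 x}).

Lemma dn_W1_lt t u : 0 < t -> t < u -> u <= L ->
  (forall x, t <= x < u -> r < W x) -> W1 t < W1 u.
Proof.
move=> t_gt0 tu uL W_gtr; rewrite -subr_gt0 dn_W1B // ?ltW //.
apply: Rintegral_gt0 => //.
- apply: integrableS (dn_integrable2 dnW) => //.
  by apply: subset_itvScc; rewrite bnd_simp; lra.
- by rewrite lebesgue_measure_itv /= lte_fin tu -EFinD lte_fin subr_gt0.
- apply: (filterS (F := almost_everywhere mu) _ W2_gt0) => x W2x.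
  rewrite /= in_itv /= => /andP[tx xu].
  by apply: W2x; [rewrite (lt_le_trans t_gt0 tx) (lt_le_trans xu uL)|
                  apply: W_gtr; rewrite tx xu].
Qed.

Lemma dn_W_gt_left s0 d : 0 < s0 -> s0 <= L -> 0 < d ->
  (forall t, 0 <= t <= L -> `|s0 - t| < d -> r < W t) ->
  W1 s0 <= 0 -> exists2 a, 0 <= a <= L & W s0 < W a.
Proof.
move=> s0_gt0 s0_le_L d_gt0 W_gtr W1s0_le0.
set a := Num.max (s0 / 2) (s0 - d / 2).
have a_lt_s0 : a < s0 by rewrite gt_max; apply/andP; split; lra.
have a_gt0 : 0 < a by rewrite lt_max divr_gt0.
have a_near : s0 - d / 2 <= a by rewrite le_max lexx orbT.
exists a; first by apply/andP; split; lra.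
apply: dn_W_gt; [lra|lra|lra|] => x /andP[ax xs0].
apply: lt_le_trans W1s0_le0; apply: dn_W1_lt; [lra|lra|lra|] => y /andP[xy ys0].
by apply: W_gtr; [apply/andP; split; lra|rewrite ger0_norm; lra].
Qed.

Lemma dn_W_gt_right s0 d : 0 < s0 -> s0 <= L -> 0 < d ->
  (forall t, 0 <= t <= L -> `|s0 - t| < d -> r < W t) ->
  0 < W1 s0 -> exists2 b, 0 <= b <= L & W s0 < W b.
Proof.
move=> s0_gt0 s0_le_L d_gt0 W_gtr W1s0_gt0.
have s0_lt_L : s0 < L.
  rewrite lt_neqAle s0_le_L andbT; apply/negP => /eqP s0_eqL.
  by move: W1s0_gt0; rewrite s0_eqL dn_W1L ltxx.
set b := Num.min L (s0 + d / 2).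
have s0_lt_b : s0 < b by rewrite lt_min; apply/andP; split; lra.
have b_le_L : b <= L by rewrite ge_min lexx.
have b_near : b <= s0 + d / 2 by rewrite ge_min lexx orbT.
exists b; first by apply/andP; split; lra.
apply: dn_W_lt; [lra|lra|lra|] => x /andP[s0x xb].
apply: lt_trans W1s0_gt0 _; apply: dn_W1_lt; [lra|lra|lra|] => y /andP[s0y yx].
by apply: W_gtr; [apply/andP; split; lra|rewrite distrC ger0_norm; lra].
Qed.


Lemma dn_W_le s : 0 <= s <= L -> W s <= r.
Proof.
have [s0 s0I s0_max] := EVT_max L_ge0 dn_W_continuous.
suff Ws0 : W s0 <= r.
  by move=> sI; apply: le_trans (s0_max s _) Ws0; rewrite in_itv.
rewrite leNgt; apply/negP => r_lt_Ws0.
have [d d_gt0 W_gtr] : exists2 d, 0 < d &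
    forall t, 0 <= t <= L -> `|s0 - t| < d -> r < W t.
  have := (subspace_continuousP _ _).1 dn_W_continuous s0 s0I.
  move=> /(cvgr_gt (W s0)) /(_ r r_lt_Ws0) /nbhs_ballP[d /= d_gt0 Wd].
  by exists d => // t tI s0t; apply: Wd; rewrite ?in_itv.
move: (s0I); rewrite in_itv /= => /andP[s0_ge0 s0_le_L].
have s0_gt0 : 0 < s0.
  rewrite lt_neqAle s0_ge0 andbT; apply/negP => /eqP s0_eq0.
  by move: r_lt_Ws0; rewrite -s0_eq0 dn_W0 ltNge r_ge0.
have [t tI] : exists2 t, 0 <= t <= L & W s0 < W t.
  have [W1s0_le0|W1s0_gt0] := leP (W1 s0) 0.
  - exact: dn_W_gt_left s0_gt0 s0_le_L d_gt0 W_gtr W1s0_le0.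
  - exact: dn_W_gt_right s0_gt0 s0_le_L d_gt0 W_gtr W1s0_gt0.
by rewrite ltNge s0_max // in_itv.
Qed.

End maximum_principle.
End dirichlet_neumann_theory.
End dirichlet_neumann.

Section domain_of_A.
Context {R : realType}.
Local Notation mu := (@lebesgue_measure R).

Lemma inDA_dirichlet_neumann n (L : R) (U U1 U2 : R -> R) :
  inDA n L U U1 U2 -> dirichlet_neumann L U U1 U2.
Proof.
move=> [[_ iU2 _ U1E UE] [U1L U0]]; split => // s sI.
- by rewrite U1E // U1L sub0r.
- by rewrite UE // U0 add0r.
Qed.

Lemma dirichlet_neumannB (L : R) (U U1 U2 V V1 V2 : R -> R) : 0 <= L ->
  dirichlet_neumann L U U1 U2 -> dirichlet_neumann L V V1 V2 ->
  dirichlet_neumann L (fun s => U s - V s) (fun s => U1 s - V1 s)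
    (fun s => U2 s - V2 s).
Proof.
move=> L_ge0 dnU dnV.
have integrable_sub f g : mu.-integrable `[0, L] (EFin \o f) ->
    mu.-integrable `[0, L] (EFin \o g) ->
    mu.-integrable `[0, L] (EFin \o (fun s => f s - g s)).
  move=> if_ ig; have := @integrableB _ _ _ mu _ (measurable_itv _) _ _ if_ ig.
  by apply: eq_integrable => // x _ /=; rewrite EFinB.
have sub0L s : s \in `[0, L] -> `[0, s] `<=` `[0, L] /\ `[s, L] `<=` `[0, L].
  by rewrite in_itv /= => /andP[s0 sL]; split; apply: subset_itvScc; rewrite bnd_simp.
have iU2 := dn_integrable2 dnU; have iV2 := dn_integrable2 dnV.
have iU1 := dn_integrable1 L_ge0 dnU; have iV1 := dn_integrable1 L_ge0 dnV.
split => [|s sI|s sI]; first exact: integrable_sub.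
- rewrite (dn_W1E dnU) // (dn_W1E dnV) // RintegralB //; first lra.
  + by apply: integrableS iU2 => //; case: (sub0L s sI).
  + by apply: integrableS iV2 => //; case: (sub0L s sI).
- rewrite (dn_WE dnU) // (dn_WE dnV) // RintegralB //.
  + by apply: integrableS iU1 => //; case: (sub0L s sI).
  + by apply: integrableS iV1 => //; case: (sub0L s sI).
Qed.

End domain_of_A.

Lemma ae_mrestr d (T : measurableType d) (R : realType)
    (mu : {measure set T -> \bar R}) (D : set T) (mD : measurable D)
    (P : T -> Prop) :
  {ae mrestr mu mD, forall x, P x} -> {ae mu, forall x, D x -> P x}.
Proof.
move=> [A [mA A0 notP_A]]; exists (A `&` D); split => //; first exact: measurableI.
move=> x /= /not_implyP[Dx notPx]; split => //; exact: notP_A.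
Qed.

Lemma mrestr_ae d (T : measurableType d) (R : realType)
    (mu : {measure set T -> \bar R}) (D : set T) (mD : measurable D)
    (P : T -> Prop) :
  (forall x, D x -> P x) -> {ae mrestr mu mD, forall x, P x}.
Proof.
move=> DP; exists (~` D); split; first exact: measurableC.
- by rewrite /mrestr setICl measure0.
- by move=> x /= notPx Dx; exact/notPx/DP.
Qed.

Section LinfNorm_theory.
Context {R : realType}.
Variable L : R.
Hypothesis L_gt0 : 0 < L.

Lemma LinfNormE (f : R -> R) :
  LinfNorm L f = ess_sup (leb0L L) (abse \o (EFin \o f)).
Proof.
have leb0L_gt0 : (0 < leb0L L [set: R])%E.
  rewrite /leb0L /mrestr setTI lebesgue_measure_itv /= lte_fin L_gt0.
  by rewrite sube0 lte_fin.
by rewrite /LinfNorm unlock leb0L_gt0.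
Qed.

Lemma LinfNorm_ge_ae (f : R -> R) :
  {ae lebR, forall x, 0 < x < L -> (`|f x|%:E <= LinfNorm L f)%E}.
Proof.
have := ae_mrestr (ess_sup_ge (leb0L L) (abse \o (EFin \o f))).
by rewrite -LinfNormE.
Qed.

Lemma LinfNorm_le (f : R -> R) (r : R) :
  (forall x, 0 < x < L -> `|f x| <= r) -> (LinfNorm L f <= r%:E)%E.
Proof.
move=> f_le; rewrite LinfNormE; apply/ess_supP/mrestr_ae => x.
by rewrite /= in_itv /= lee_fin => /f_le.
Qed.

End LinfNorm_theory.

Theorem lemma2 (R : realType) (n : nat) (L : R) (beta : R -> R)
  (U U1 U2 V V1 V2 : R -> R) (lambda : R) :
  (1 <= n)%N -> 0 < L -> {homo beta : x y / x <= y} ->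
  inDA n L U U1 U2 -> inDA n L V V1 V2 -> 0 < lambda ->
  (LinfNorm L (fun s => pos_part (U s - V s))
   <= LinfNorm L (fun s => pos_part (U s - V s
        + lambda * (opA n beta U2 s - opA n beta V2 s))))%E.
Proof.
move=> n_gt0 L_gt0 beta_mono /inDA_dirichlet_neumann dnU
  /inDA_dirichlet_neumann dnV lambda_gt0.
set h := (fun s => pos_part (U s - V s + _)).
have [->|h_fin] := eqVneq (LinfNorm L h) +oo%E; first exact: leey.
have hE : LinfNorm L h = (fine (LinfNorm L h))%:E.
  by rewrite fineK // ge0_fin_numE ?Lnorm_ge0 // ltey.
set r := fine (LinfNorm L h) in hE *; rewrite hE.
have r_ge0 : 0 <= r by rewrite -lee_fin -hE Lnorm_ge0.
have W2_gt0 : {ae lebR, forall x, 0 < x < L -> r < U x - V x -> 0 < U2 x - V2 x}.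
  apply: (filterS (F := almost_everywhere lebR) _ (LinfNorm_ge_ae L_gt0 h)).
  move=> x h_le /[dup] /andP[x_gt0 _] /h_le; rewrite hE lee_fin subr_gt0 => hx_le.
  apply: (opA_resolvent_lt n_gt0 x_gt0 beta_mono lambda_gt0).
  exact: le_trans (ler_norm _) hx_le.
have W_le := dn_W_le (ltW L_gt0) (dirichlet_neumannB (ltW L_gt0) dnU dnV) r_ge0 W2_gt0.
apply: LinfNorm_le => // x /andP[x_gt0 x_lt_L].
rewrite ger0_norm /pos_part ?le_max ?lexx ?orbT // ge_max r_ge0 andbT.
by apply: W_le; rewrite !ltW.
Qed.
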